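(* There is no formula $A$ of $\mathbf{L_1}$ such that both $\vdash_H A$ and $\dashv_H A$.
   Context: Formulas of $\mathbf{L_1}$: built from atomic formulas $\epsilon ab$ ($a,b$ name variables, possibly equal) with primitive connectives $\vee,\sim$; $\wedge,\supset,\equiv$ defined as usual. Disjunctions may be associated in any way. $\vdash_H A$: $A$ belongs to the smallest set containing all instances of classical propositional tautologies and all formulas $\epsilon ab\supset\epsilon aa$, $(\epsilon ab\wedge\epsilon bc)\supset\epsilon ac$, $(\epsilon ab\wedge\epsilon bb)\supset\epsilon ba$, closed under modus ponens. Positive/negative parts (occurrences): $A$ is a positive part of $A$; if $B\vee C$ is a positive part then $B,C$ are positive parts; if $\sim B$ is a positive part then $B$ is a negative part; if $\sim B$ is a negative part then $B$ is a positive part. $F[B_+,B_-]$ denotes a formula in which some $B$ has one occurrence as positive part and another non-overlapping occurrence as negative part. Hintikka formula: a formula $H$ such that (1) $H$ is not of the form $F[B_+,B_-]$; (2) if $B\vee C$ is a negative part of $H$ then $B$ or $C$ is; (3) if $\epsilon ab$ is a negative part then so is $\epsilon aa$; (4) if $\epsilon ab,\epsilon bc$ are negative parts then so is $\epsilon ac$; (5) if $\epsilon ab,\epsilon bb$ are negative parts then so is $\epsilon ba$. $\mathbf{HAR}$: fix a name variable $a_0$; $\dashv_H$ is the smallest set such that $\dashv_H\epsilon a_0a_0$; $\dashv_H\sim\epsilon a_0a_0$; if $\vdash_H A\supset B$ and $\dashv_H B$ then $\dashv_H A$; if $\dashv_H A$ and $A$ is obtained from $B$ by uniform substitution of name variables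 for name variables then $\dashv_H B$; if $A$ is a Hintikka formula that is a disjunction of atomic or negated atomic formulas, $\dashv_H A$, and $\epsilon ab$ is not a negative part of $A$, then $\dashv_H A\vee\epsilon ab$. *)

(* Language L1 of Lesniewski's elementary ontology (Hilbert system H
   and its refutation system HAR). *)
From Stdlib Require Import List.
Import ListNotations.

Definition name := nat.

Inductive formula : Type :=
| Eps : name -> name -> formula
| Or  : formula -> formula -> formula
| Neg : formula -> formula.

Definition Imp (A B : formula) : formula := Or (Neg A) B.
Definition And (A B : formula) : formula := Neg (Or (Neg A) (Neg B)).
Definition Equiv (A B : formula) : formula := And (Imp A B) (Imp B A).

Inductive pformula : Type :=
| PVar : nat -> pformula
| POr  : pformula -> pformula -> pformula
| PNeg : pformula -> pformula.

Fixpoint peval (v : nat -> bool) (P : pformula) : bool :=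
  match P with
  | PVar n => v n
  | POr P Q => orb (peval v P) (peval v Q)
  | PNeg P => negb (peval v P)
  end.

Definition ptautology (P : pformula) : Prop := forall v, peval v P = true.

Fixpoint psubst (s : nat -> formula) (P : pformula) : formula :=
  match P with
  | PVar n => s n
  | POr P Q => Or (psubst s P) (psubst s Q)
  | PNeg P => Neg (psubst s P)
  end.

Definition taut_instance (A : formula) : Prop :=
  exists (P : pformula) (s : nat -> formula), ptautology P /\ A = psubst s P.

Inductive provable : formula -> Prop :=
| pr_taut : forall A, taut_instance A -> provable A
| pr_ax1 : forall a b, provable (Imp (Eps a b) (Eps a a))
| pr_ax2 : forall a b c, provable (Imp (And (Eps a b) (Eps b c)) (Eps a c))
| pr_ax3 : forall a b, provable (Imp (And (Eps a b) (Eps b b)) (Eps b a))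
| pr_mp : forall A B, provable (Imp A B) -> provable A -> provable B.

(* Occurrences of positive/negative parts.  [part A p pol B]: the subformula
   occurrence of A at path p (0 = left / only child, 1 = right child) is B and
   is a positive part (pol = true) or a negative part (pol = false). *)
Inductive part (A : formula) : list nat -> bool -> formula -> Prop :=
| part_root : part A [] true A
| part_or_l : forall p B C, part A p true (Or B C) -> part A (p ++ [0]) true B
| part_or_r : forall p B C, part A p true (Or B C) -> part A (p ++ [1]) true C
| part_neg_pos : forall p B, part A p true (Neg B) -> part A (p ++ [0]) false B
| part_neg_neg : forall p B, part A p false (Neg B) -> part A (p ++ [0]) true B.

Definition pos_part (A B : formula) : Prop := exists p, part A p true B.
Definition neg_part (A B : formula) : Prop := exists p, part A p false B.

Definition is_prefix (p q : list nat) : Prop := exists r, q = p ++ r.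

(* A is of the form F[B+, B-]: some B has an occurrence as positive part and
   another non-overlapping occurrence as negative part *)
Definition has_pos_neg_pair (A : formula) : Prop :=
  exists B p q, part A p true B /\ part A q false B /\
    ~ is_prefix p q /\ ~ is_prefix q p.

Definition hintikka (H : formula) : Prop :=
  ~ has_pos_neg_pair H /\
  (forall B C, neg_part H (Or B C) -> neg_part H B \/ neg_part H C) /\
  (forall a b, neg_part H (Eps a b) -> neg_part H (Eps a a)) /\
  (forall a b c, neg_part H (Eps a b) -> neg_part H (Eps b c) ->
                 neg_part H (Eps a c)) /\
  (forall a b, neg_part H (Eps a b) -> neg_part H (Eps b b) ->
               neg_part H (Eps b a)).

Inductive lit_disj : formula -> Prop :=
| ld_atom : forall a b, lit_disj (Eps a b)
| ld_neg : forall a b, lit_disj (Neg (Eps a b))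
| ld_or : forall A B, lit_disj A -> lit_disj B -> lit_disj (Or A B).

Fixpoint nsubst (f : name -> name) (A : formula) : formula :=
  match A with
  | Eps a b => Eps (f a) (f b)
  | Or A B => Or (nsubst f A) (nsubst f B)
  | Neg A => Neg (nsubst f A)
  end.

Inductive rejected (a0 : name) : formula -> Prop :=
| rj_ax1 : rejected a0 (Eps a0 a0)
| rj_ax2 : rejected a0 (Neg (Eps a0 a0))
| rj_mp : forall A B, provable (Imp A B) -> rejected a0 B -> rejected a0 A
| rj_subst : forall A B (f : name -> name),
    rejected a0 A -> A = nsubst f B -> rejected a0 B
| rj_hint : forall A a b,
    hintikka A -> lit_disj A -> rejected a0 A -> ~ neg_part A (Eps a b) ->
    rejected a0 (Or A (Eps a b)).

(* The proof is semantic.  An ε-model is a boolean relation [e] on name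
   variables satisfying the three specific axioms of H (left reflexivity,
   transitivity, and "εab ∧ εbb ⊃ εba"); formulas are evaluated classically
   with εab read as [e a b].
   - Soundness: every H-provable formula is true in every ε-model.
   - Refutation soundness: every HAR-rejected formula is false in some
     ε-model.  The two axioms of HAR are falsified by the empty and the full
     relation; rejection by modus ponens and by name substitution transfer a
     countermodel (the latter by composing [e] with the substitution); for the
     Hintikka rule, the relation "εxy is a negative part of H" is an ε-model
     (conditions (3)-(5)) falsifying the literal disjunction H (condition (1)
     keeps positive atoms out of it) and the new disjunct εab.
   Condition (1) speaks about non-overlapping occurrences; to handle it we
   compute occurrences with a lookup function [locate] along a path, so that
   occurrences are unique and atomic occurrences have no proper extensions. *)
From Stdlib Require Import List Bool ClassicalDescription.
Import ListNotations.

Fixpoint eval (e : name -> name -> bool) (A : formula) : bool :=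
  match A with
  | Eps a b => e a b
  | Or A B => eval e A || eval e B
  | Neg A => negb (eval e A)
  end.

Definition eps_model (e : name -> name -> bool) : Prop :=
  (forall a b, e a b = true -> e a a = true) /\
  (forall a b c, e a b = true -> e b c = true -> e a c = true) /\
  (forall a b, e a b = true -> e b b = true -> e b a = true).

Lemma eval_psubst e s P : eval e (psubst s P) = peval (fun n => eval e (s n)) P.
Proof. induction P; simpl; congruence. Qed.

Lemma eval_nsubst e f B : eval e (nsubst f B) = eval (fun x y => e (f x) (f y)) B.
Proof. induction B; simpl; congruence. Qed.

Lemma eps_model_rename e f : eps_model e -> eps_model (fun x y => e (f x) (f y)).
Proof. intros [m1 [m2 m3]]; repeat split; eauto. Qed.

Lemma provable_sound A : provable A -> forall e, eps_model e -> eval e A = true.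
Proof.
  induction 1 as [A [P [s [HP ->]]]|a b|a b c|a b|A B _ IHimp _ IHA];
    intros e [m1 [m2 m3]]; simpl.
  - rewrite eval_psubst; apply HP.
  - specialize (m1 a b); destruct (e a b), (e a a); auto.
  - specialize (m2 a b c); destruct (e a b), (e b c), (e a c); auto.
  - specialize (m3 a b); destruct (e a b), (e b b), (e b a); auto.
  - assert (Himp := IHimp e (conj m1 (conj m2 m3))); simpl in Himp.
    now rewrite (IHA e (conj m1 (conj m2 m3))) in Himp.
Qed.

Fixpoint locate (A : formula) (pol : bool) (p : list nat) {struct p} :
  option (bool * formula) :=
  match p with
  | [] => Some (pol, A)
  | k :: p' =>
      match A, pol, k with
      | Or B _, true, 0 => locate B true p'
      | Or _ C, true, 1 => locate C true p'
      | Neg B, _, 0 => locate B (negb pol) p'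
      | _, _, _ => None
      end
  end.

Lemma locate_app A pol p r :
  locate A pol (p ++ r) =
  match locate A pol p with Some (b, D) => locate D b r | None => None end.
Proof.
  revert A pol; induction p as [|k p IH]; intros A pol; [reflexivity|].
  destruct A, pol, k as [|[|k]]; simpl; auto.
Qed.

Lemma part_locate A p b B : part A p b B -> locate A true p = Some (b, B).
Proof. induction 1; [reflexivity|..]; rewrite locate_app, IHpart; reflexivity. Qed.

Lemma part_unique A p b B b' B' : part A p b B -> part A p b' B' -> b = b' /\ B = B'.
Proof.
  intros H H'; apply part_locate in H; apply part_locate in H'.
  rewrite H in H'; injection H'; auto.
Qed.

Lemma part_atom_leaf A p b x y q b' C :
  part A p b (Eps x y) -> part A q b' C -> is_prefix p q -> q = p.
Proof.
  intros Hp Hq [[|k r] ->]; [now rewrite app_nil_r|].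
  apply part_locate in Hq; rewrite locate_app, (part_locate _ _ _ _ Hp) in Hq.
  discriminate.
Qed.

(* An atom occurring both positively and negatively yields a forbidden pair
   F[B+, B-]: the two occurrences cannot overlap. *)
Lemma atom_pos_neg_pair A p q x y :
  part A p true (Eps x y) -> part A q false (Eps x y) -> has_pos_neg_pair A.
Proof.
  intros Hp Hq; exists (Eps x y), p, q; repeat split; auto; intros Hpre.
  - rewrite (part_atom_leaf _ _ _ _ _ _ _ _ Hp Hq Hpre) in Hq.
    now destruct (part_unique _ _ _ _ _ _ Hp Hq).
  - rewrite (part_atom_leaf _ _ _ _ _ _ _ _ Hq Hp Hpre) in Hp.
    now destruct (part_unique _ _ _ _ _ _ Hp Hq).
Qed.

Lemma part_or_left B C p b X : part B p b X -> part (Or B C) (0 :: p) b X.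
Proof.
  induction 1; rewrite ?app_comm_cons.
  - exact (part_or_l _ [] B C (part_root _)).
  - eapply part_or_l; eauto.
  - eapply part_or_r; eauto.
  - eapply part_neg_pos; eauto.
  - eapply part_neg_neg; eauto.
Qed.

Lemma part_or_right B C p b X : part C p b X -> part (Or B C) (1 :: p) b X.
Proof.
  induction 1; rewrite ?app_comm_cons.
  - exact (part_or_r _ [] B C (part_root _)).
  - eapply part_or_l; eauto.
  - eapply part_or_r; eauto.
  - eapply part_neg_pos; eauto.
  - eapply part_neg_neg; eauto.
Qed.

Lemma lit_disj_false e D : lit_disj D ->
  (forall p x y, part D p true (Eps x y) -> e x y = false) ->
  (forall p x y, part D p false (Eps x y) -> e x y = true) ->
  eval e D = false.
Proof.
  induction 1 as [a b|a b|A B _ IHA _ IHB]; intros Hpos Hneg; simpl.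
  - exact (Hpos [] a b (part_root _)).
  - rewrite (Hneg [0] a b); [reflexivity|].
    exact (part_neg_pos _ [] _ (part_root _)).
  - rewrite IHA, IHB; auto; intros p x y Hp.
    + exact (Hpos _ _ _ (part_or_right _ _ _ _ _ Hp)).
    + exact (Hneg _ _ _ (part_or_right _ _ _ _ _ Hp)).
    + exact (Hpos _ _ _ (part_or_left _ _ _ _ _ Hp)).
    + exact (Hneg _ _ _ (part_or_left _ _ _ _ _ Hp)).
Qed.

Definition neg_atoms (H : formula) (x y : name) : bool :=
  if excluded_middle_informative (neg_part H (Eps x y)) then true else false.

Lemma neg_atoms_spec H x y : neg_atoms H x y = true <-> neg_part H (Eps x y).
Proof.
  unfold neg_atoms; destruct excluded_middle_informative; split; auto; discriminate.
Qed.

(* Conditions (3)-(5) say exactly that [neg_atoms H] is an ε-model. *)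
Lemma neg_atoms_model H : hintikka H -> eps_model (neg_atoms H).
Proof.
  intros [_ [_ [h3 [h4 h5]]]];
    repeat split; intros; rewrite neg_atoms_spec in *; eauto.
Qed.

Lemma neg_atoms_falsify H : hintikka H -> lit_disj H -> eval (neg_atoms H) H = false.
Proof.
  intros [Hpair _] Hld; apply lit_disj_false; auto.
  - intros p x y Hp; apply not_true_iff_false; rewrite neg_atoms_spec.
    intros [q Hq]; exact (Hpair (atom_pos_neg_pair _ _ _ _ _ Hp Hq)).
  - intros p x y Hp; apply neg_atoms_spec; now exists p.
Qed.

Lemma rejected_refutable a0 A :
  rejected a0 A -> exists e, eps_model e /\ eval e A = false.
Proof.
  induction 1 as [| |A B Himp _ [e [Me Ee]]|A B f _ [e [Me Ee]] ->
                 |A a b Hhint Hld _ _ Hab].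
  - exists (fun _ _ => false); repeat split; auto.
  - exists (fun _ _ => true); repeat split; auto.
  - exists e; split; auto.
    pose proof (provable_sound _ Himp e Me) as S; simpl in S.
    rewrite Ee, orb_false_r in S; now apply negb_true_iff.
  - exists (fun x y => e (f x) (f y)); split.
    + now apply eps_model_rename.
    + now rewrite <- eval_nsubst.
  - exists (neg_atoms A); split; [now apply neg_atoms_model|].
    simpl; rewrite neg_atoms_falsify by assumption; simpl.
    apply not_true_iff_false; rewrite neg_atoms_spec; exact Hab.
Qed.

Theorem theorem6p4 : forall (a0 : name) (A : formula),
  ~ (provable A /\ rejected a0 A).
Proof.
  intros a0 A [Hprov Hrej].
  destruct (rejected_refutable _ _ Hrej) as [e [Me Hfalse]].
  now rewrite (provable_sound _ Hprov e Me) in Hfalse.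
Qed.
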